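(* Let $T=\{\!\{T_1,\dots,T_m\}\!\}$ where each $T_j$ is a $G_j$-join tree with $G_j$ a finite subgraph of $\mathsf{Path}_{\mathbb Z}$. Then for every $j\in[m]$, \[\Psi(T)\ge\Psi(T_j)+\vec\Delta(G_1,\dots,G_m\mid G_j).\]
   Context: Graphs are finite simple graphs without isolated vertices; $\emptyset$ is the empty graph. $\mathsf{Path}_{\mathbb Z}$ has vertex set $\mathbb Z$ and edges $\{i-1,i\}$. $\Delta(G)$ = number of connected components; $G\ominus F$ = union of components of $G$ sharing no vertex with $F$; $\vec\Delta(H_1,\dots,H_r\mid F)=\sum_{l=1}^r\Delta(H_l\ominus(F\cup H_1\cup\dots\cup H_{l-1}))$, $\vec\Delta(H_1,\dots,H_r)=\vec\Delta(H_1,\dots,H_r\mid\emptyset)$. Join trees: for finite $G\subset\mathsf{Path}_{\mathbb Z}$, a $G$-join tree is a finite rooted binary tree (each non-leaf has an ordered left and right child) with nodes labeled by subgraphs of $G$: leaves by single-edge subgraphs of $G$ or $\emptyset$, each non-leaf by the union of its children's labels, the root by $G$. $T_1\cup T_2$ is the join tree with a new root whose left subtree is $T_1$ and right subtree $T_2$. $\{\!\{T_1\}\!\}=T_1$ and $\{\!\{T_1,\dots,T_m\}\!\}=\{\!\{T_1,\dots,T_{m-1}\}\!\}\cup\{\!\{T_1,\dots,T_{m-2},T_m\}\!\}$ for $m\ge2$. For a $G$-join tree $S$ and a root-to-leaf path $b_1,\dots,b_\ell$, let $B_j$ ($j<\ell$) be the label of the child of $b_j$ other than $b_{j+1}$ and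 $B_\ell$ the label of leaf $b_\ell$; $\{B_1,\dots,B_\ell\}$ is an $S$-branch covering. $\Psi(S)$ is the maximum of $\vec\Delta(C_1,\dots,C_r)$ over all $S$-branch coverings $\mathcal C$ and all enumerations $C_1,\dots,C_r$ (without repetition) of $\mathcal C$. *)

From mathcomp Require Import all_boot all_order all_algebra.
From mathcomp Require Import finmap.
Set Implicit Arguments. Unset Strict Implicit. Unset Printing Implicit Defensive.
Import Order.TTheory GRing.Theory Num.Theory.
Local Open Scope fset_scope.

(* A finite subgraph of Path_Z (without isolated vertices) is determined by its
   edge set.  The edge {i-1, i} of Path_Z is encoded by the integer i. *)
Definition graph := {fset int}.

Definition verts (G : graph) : {fset int} := G `|` [fset (e - 1)%R | e in G].

(* In Path_Z, edges e and f of G lie in the same connected component of G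
   iff every edge between them (inclusive) belongs to G. *)
Definition linked (G : graph) (e f : int) : bool :=
  all (fun n : nat => (Num.min e f + n%:Z)%R \in G) (iota 0 (absz (f - e)%R).+1).

Definition comp (G : graph) (e : int) : graph := [fset f in G | linked G e f].

Definition ncomp (G : graph) : nat := #|` [fset comp G e | e in G] |.

Definition gsep (G F : graph) : graph :=
  [fset e in G | verts (comp G e) `&` verts F == fset0].

Fixpoint vdelta (F : graph) (Hs : seq graph) : nat :=
  match Hs with
  | [::] => 0
  | H :: Hs' => ncomp (gsep H F) + vdelta (F `|` H) Hs'
  end.

(* Join trees: binary trees whose leaves carry a single edge (Some i) or the
   empty graph (None); the label of an inner node is the union of its
   children's labels, so labels are computed by [jlabel].  A G-join tree is a
   tree S with jlabel S = G. *)
Inductive jtree : Type :=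
  | JLeaf of option int
  | JNode of jtree & jtree.

Fixpoint jlabel (S : jtree) : graph :=
  match S with
  | JLeaf None => fset0
  | JLeaf (Some i) => [fset i]
  | JNode l r => jlabel l `|` jlabel r
  end.

(* bigjoin n f = {{ f 0, ..., f (n-1) }}  (n >= 1) *)
Fixpoint bigjoin (n : nat) (f : nat -> jtree) : jtree :=
  match n with
  | 0 => JLeaf None
  | 1 => f 0
  | (n'.+1 as k).+1 =>
      JNode (bigjoin k f) (bigjoin k (fun i => if i == n' then f k else f i))
  end.

(* All S-branch coverings, each as the list B_1, ..., B_l along a
   root-to-leaf path. *)
Fixpoint branch_coverings (S : jtree) : seq (seq graph) :=
  match S with
  | JLeaf _ => [:: [:: jlabel S]]
  | JNode l r =>
      [seq jlabel r :: c | c <- branch_coverings l] ++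
      [seq jlabel l :: c | c <- branch_coverings r]
  end.

(* Psi(S): max of vecDelta(C_1,...,C_r) over all coverings and all
   enumerations without repetition of the covering (as a set). *)
Definition Psi (S : jtree) : nat :=
  \max_(c <- branch_coverings S)
     \max_(s <- permutations (undup c)) vdelta fset0 s.

(* A branch of {{T_1, ..., T_m}} ending inside a copy of T_j covers, besides a
   branch covering of T_j, the labels of the siblings met on the way down, each
   a union of G_i's.  Appending these sibling labels bottom-up to an optimal
   enumeration for T_j adds exactly vecDelta(G_1, ..., G_m | G_j): when X is
   contained in F, the components of X ∪ Y avoiding F are those of Y avoiding F,
   so each sibling contributes the components of the one G_i it adds, and a
   label already covered contributes nothing. *)
From Pilot Require Import Defs.
From mathcomp Require Import all_boot all_order all_algebra.
From mathcomp Require Import finmap zify.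
Set Implicit Arguments. Unset Strict Implicit. Unset Printing Implicit Defensive.
Import Order.TTheory GRing.Theory Num.Theory.
Local Open Scope fset_scope.

Lemma in_verts (G : graph) (v : int) : (v \in verts G) = (v \in G) || ((v + 1)%R \in G).
Proof.
rewrite /verts in_fsetU; congr (_ || _); apply/imfsetP/idP => /=.
  by case=> x xG ->; rewrite subrK.
by move=> vG; exists (v + 1)%R; rewrite ?addrK.
Qed.

Lemma verts_subset (A B : graph) : A `<=` B -> verts A `<=` verts B.
Proof.
move=> /fsubsetP AB; apply/fsubsetP => v; rewrite !in_verts.
by case/orP => /AB ->; rewrite ?orbT.
Qed.

Lemma linkedP (G : graph) (e f : int) :
  reflect (forall g, (Num.min e f <= g <= Num.max e f)%R -> g \in G) (linked G e f).
Proof.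
apply: (iffP allP) => [Gef g /andP[g_ge g_le] | Gef n].
  have -> : g = (Num.min e f + `|g - Num.min e f|%N%:Z)%R by lia.
  by apply: Gef; rewrite mem_iota; lia.
by rewrite mem_iota => n_lt; apply: Gef; apply/andP; lia.
Qed.

Lemma linked_refl (G : graph) (e : int) : e \in G -> linked G e e.
Proof. by move=> eG; apply/linkedP => g g_e; have -> : g = e by lia. Qed.

Lemma linked_subset (G H : graph) (e f : int) : G `<=` H -> linked G e f -> linked H e f.
Proof. by move=> /fsubsetP GH /linkedP Gef; apply/linkedP => g /Gef/GH. Qed.

Lemma in_comp (G : graph) (e f : int) : (f \in Defs.comp G e) = (f \in G) && linked G e f.
Proof. by rewrite !inE. Qed.

Lemma comp_refl (G : graph) (e : int) : e \in G -> e \in Defs.comp G e.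
Proof. by move=> eG; rewrite in_comp eG linked_refl. Qed.

Lemma comp_subset (G H : graph) (e : int) : G `<=` H -> Defs.comp G e `<=` Defs.comp H e.
Proof.
move=> GH; apply/fsubsetP => f; rewrite !in_comp => /andP[fG Gef].
by rewrite (fsubsetP GH _ fG) (linked_subset GH).
Qed.

Lemma in_gsep (G F : graph) (e : int) :
  (e \in gsep G F) = (e \in G) && [disjoint verts (Defs.comp G e) & verts F]%fset.
Proof. by rewrite !inE fsetI_eq0. Qed.

Lemma gsep_subset (H F : graph) : H `<=` F -> gsep H F = fset0.
Proof.
move=> /fsubsetP HF; apply/fsetP => e; rewrite in_gsep inE.
apply/negP => /andP[eH /fdisjointP isolated].
have /isolated : e \in verts (Defs.comp H e) by rewrite in_verts comp_refl.
by rewrite in_verts HF.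
Qed.

Lemma ncomp_gsep_subset (H F : graph) : H `<=` F -> ncomp (gsep H F) = 0.
Proof. by move=> /gsep_subset->; rewrite /ncomp imfset0 cardfs0. Qed.

Lemma comp_adjacent (Y : graph) (e g : int) :
  (g - 1)%R \in Defs.comp Y e \/ (g + 1)%R \in Defs.comp Y e -> g \in Y ->
  g \in Defs.comp Y e.
Proof.
rewrite !in_comp => g_adj gY; rewrite gY.
case: g_adj => /andP[g'Y /linkedP Yeg']; apply/linkedP => h /andP[h_ge h_le];
  have [->|h_ne_g] := eqVneq h g; rewrite // Yeg' //; apply/andP; lia.
Qed.

Lemma verts_meet_adjacent (A B : graph) (g : int) :
  (g - 1)%R \in A \/ (g + 1)%R \in A -> g \in B -> ~~ [disjoint verts A & verts B]%fset.
Proof.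
move=> g_adj gB; apply/fdisjointP => AB.
case: g_adj => [g'A | g'A]; [have /AB : (g - 1)%R \in verts A | have /AB : g \in verts A];
  by rewrite in_verts ?subrK ?g'A ?gB ?orbT.
Qed.

(* A walk in [X `|` Y] leaving the component of [e] in [Y] would first step onto
   an edge of [X], hence of [F], adjacent to that component. *)
Lemma linked_isolated (X Y F : graph) (e f : int) :
  X `<=` F -> e \in Y -> [disjoint verts (Defs.comp Y e) & verts F]%fset ->
  linked (X `|` Y) e f -> linked Y e f.
Proof.
move=> /fsubsetP XF eY isolated /linkedP XYef.
suff near_in_comp d g : (Num.min e f <= g <= Num.max e f)%R -> (`|g - e|%N <= d)%N ->
    g \in Defs.comp Y e.
  by apply/linkedP => g /near_in_comp/(_ (leqnn _)); rewrite in_comp => /andP[].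
elim: d g => [|d IH] g g_ef g_d; first by rewrite (_ : g = e) ?comp_refl; lia.
have [|g_far] := leqP `|g - e|%N d; first exact: IH.
have g_adj : (g - 1)%R \in Defs.comp Y e \/ (g + 1)%R \in Defs.comp Y e.
  by case: (boolP (e < g)%R) => ?; [left | right]; apply: IH; rewrite ?g_ef; lia.
apply: (comp_adjacent g_adj).
have /fsetUP[/XF gF|//] := XYef g g_ef.
by case/negP: (verts_meet_adjacent g_adj gF).
Qed.

Lemma gsepU_subset (X Y F : graph) : X `<=` F -> gsep (X `|` Y) F = gsep Y F.
Proof.
move=> XF; apply/fsetP => e; rewrite !in_gsep in_fsetU.
apply/andP/andP => [[/orP[eX|eY] /fdisjointP isolated] | [eY isolated]].
- have /isolated : e \in verts (Defs.comp (X `|` Y) e).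
    by rewrite in_verts comp_refl // in_fsetU eX.
  by rewrite in_verts (fsubsetP XF _ eX).
- split=> //; apply/fdisjointP => v.
  by move/(fsubsetP (verts_subset (comp_subset e (fsubsetUr X Y)))); apply: isolated.
- split; first by rewrite eY orbT.
  apply/fdisjointP => v v_comp; apply: (fdisjointP isolated).
  move: v v_comp; apply/fsubsetP/verts_subset/fsubsetP => f; rewrite !in_comp.
  move=> /andP[_ /(linked_isolated XF eY isolated) Yef]; rewrite Yef andbT.
  by move/linkedP: Yef; apply; apply/andP; lia.
Qed.

Lemma vdelta_cat (F : graph) (s t : seq graph) :
  vdelta F (s ++ t) = (vdelta F s + vdelta (F `|` \bigcup_(H <- s) H) t)%N.
Proof.
elim: s F => [|H s IH] F /=; first by rewrite big_nil fsetU0.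
by rewrite IH big_cons fsetUA addnA.
Qed.

Lemma vdelta_rcons (F : graph) (s : seq graph) (H : graph) :
  vdelta F (rcons s H) = (vdelta F s + ncomp (gsep H (F `|` \bigcup_(K <- s) K)))%N.
Proof. by rewrite -cats1 vdelta_cat /= addn0. Qed.

Definition rcons_new (s : seq graph) (H : graph) : seq graph :=
  if H \in s then s else rcons s H.

Lemma vdelta_rcons_new (F : graph) (s : seq graph) (H : graph) :
  vdelta F (rcons_new s H) = (vdelta F s + ncomp (gsep H (F `|` \bigcup_(K <- s) K)))%N.
Proof.
rewrite /rcons_new; case: ifP => [Hs | _]; last exact: vdelta_rcons.
by rewrite ncomp_gsep_subset ?addn0 // fsubsetU // (bigfcup_sup _ Hs) ?orbT.
Qed.

Definition branch_enum (S : jtree) (s : seq graph) : Prop :=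
  uniq s /\ exists2 c, c \in branch_coverings S & s =i c.

Lemma bigcup_branch_covering (S : jtree) (c : seq graph) :
  c \in branch_coverings S -> \bigcup_(H <- c) H = jlabel S.
Proof.
elim: S c => [o|l IHl r IHr] c /=.
  by rewrite inE => /eqP->; rewrite big_seq1.
rewrite mem_cat => /orP[] /mapP[c' c'_in ->]; rewrite big_cons.
  by rewrite (IHl _ c'_in) fsetUC.
by rewrite (IHr _ c'_in).
Qed.

Lemma bigcup_branch_enum (S : jtree) (s : seq graph) :
  branch_enum S s -> \bigcup_(H <- s) H = jlabel S.
Proof.
by case=> _ [c c_in sc]; rewrite (eq_big_idem _ _ (@fsetUid _) sc) (bigcup_branch_covering c_in).
Qed.

Lemma branch_enum_rcons_new (S : jtree) (s : seq graph) (H : graph) (c : seq graph) :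
  uniq s -> s =i c -> H :: c \in branch_coverings S -> branch_enum S (rcons_new s H).
Proof.
move=> s_uniq sc Hc_in; split.
  by rewrite /rcons_new; case: ifP => // /negbT; rewrite rcons_uniq => ->.
exists (H :: c) => // K; rewrite /rcons_new in_cons -sc.
by case: ifP => [Hs | _]; rewrite ?mem_rcons ?in_cons //; case: eqVneq => // ->.
Qed.

Lemma branch_enumL (l r : jtree) (s : seq graph) :
  branch_enum l s -> branch_enum (JNode l r) (rcons_new s (jlabel r)).
Proof.
case=> s_uniq [c c_in sc]; apply: (branch_enum_rcons_new s_uniq sc).
by rewrite /= mem_cat map_f.
Qed.

Lemma branch_enumR (l r : jtree) (s : seq graph) :
  branch_enum r s -> branch_enum (JNode l r) (rcons_new s (jlabel l)).
Proof.
case=> s_uniq [c c_in sc]; apply: (branch_enum_rcons_new s_uniq sc).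
by rewrite /= mem_cat map_f ?orbT.
Qed.

Lemma exists_branch_enum (S : jtree) : exists s, branch_enum S s.
Proof.
elim: S => [o|l [s l_s] r _]; last by exists (rcons_new s (jlabel r)); apply: branch_enumL.
by exists [:: jlabel (JLeaf o)]; split=> //; exists [:: jlabel (JLeaf o)]; rewrite /= ?inE.
Qed.

Lemma vdelta_le_Psi (S : jtree) (s : seq graph) : branch_enum S s -> (vdelta fset0 s <= Psi S)%N.
Proof.
case=> s_uniq [c c_in sc]; apply: (bigmaxn_sup_seq c) => //.
apply: (bigmaxn_sup_seq s) => //; rewrite mem_permutations uniq_perm ?undup_uniq //.
by move=> H; rewrite mem_undup sc.
Qed.

Lemma Psi_addn_leq (S : jtree) (d n : nat) :
  (forall s, branch_enum S s -> vdelta fset0 s + d <= n)%N -> (Psi S + d <= n)%N.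
Proof.
move=> bound; have [s0 /bound s0_bound] := exists_branch_enum S.
have d_n : d <= n by apply: leq_trans s0_bound; rewrite leq_addl.
rewrite addnC -leq_subRL //; apply/bigmax_leqP_seq => c c_in _.
apply/bigmax_leqP_seq => s; rewrite mem_permutations => s_perm _.
rewrite leq_subRL // addnC; apply: bound; split; first by rewrite (perm_uniq s_perm) undup_uniq.
by exists c => // H; rewrite (perm_mem s_perm) mem_undup.
Qed.

Definition labels (f : nat -> jtree) (k : nat) : seq graph := [seq jlabel (f i) | i <- iota 0 k].

Definition shift_at (f : nat -> jtree) (k : nat) : nat -> jtree :=
  fun i => if i == k then f k.+1 else f i.

Lemma bigjoinSS (f : nat -> jtree) (k : nat) :
  bigjoin k.+2 f = JNode (bigjoin k.+1 f) (bigjoin k.+1 (shift_at f k)).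
Proof. by []. Qed.

Lemma labelsS (f : nat -> jtree) (k : nat) : labels f k.+1 = rcons (labels f k) (jlabel (f k)).
Proof. by rewrite /labels -addn1 iotaD map_cat cats1. Qed.

Lemma labels_shift_at (f : nat -> jtree) (k : nat) : labels (shift_at f k) k = labels f k.
Proof.
apply/eq_in_map => i; rewrite mem_iota /shift_at => /andP[_ i_lt].
by rewrite ifN // ltn_eqF.
Qed.

Lemma bigcup_rcons (s : seq graph) (H : graph) :
  \bigcup_(K <- rcons s H) K = \bigcup_(K <- s) K `|` H.
Proof. exact: big_rcons. Qed.

Lemma jlabel_sub_labels (f : nat -> jtree) (j k : nat) :
  j < k -> jlabel (f j) `<=` \bigcup_(H <- labels f k) H.
Proof. by move=> j_lt; apply: bigfcup_sup => //; rewrite map_f // mem_iota. Qed.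

Lemma jlabel_bigjoin (f : nat -> jtree) (k : nat) :
  jlabel (bigjoin k.+1 f) = \bigcup_(H <- labels f k.+1) H.
Proof.
elim: k f => [|k IH] f; first by rewrite /labels big_seq1.
rewrite bigjoinSS /= !IH labelsS (labelsS (shift_at f k)) labels_shift_at !bigcup_rcons.
rewrite /shift_at eqxx fsetUA labelsS bigcup_rcons; congr fsetU.
by rewrite labelsS bigcup_rcons fsetUAC fsetUid.
Qed.

Lemma branch_enum_bigjoin (n : nat) (f : nat -> jtree) (j : nat) (s : seq graph) :
  j <= n -> branch_enum (f j) s ->
  exists2 s', branch_enum (bigjoin n.+1 f) s' &
    vdelta fset0 s' = (vdelta fset0 s + vdelta (jlabel (f j)) (labels f n.+1))%N.
Proof.
elim: n f j s => [|n IH] f j s.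
  rewrite leqn0 => /eqP-> f0_s; exists s => //.
  by rewrite /labels /= ncomp_gsep_subset ?addn0.
rewrite leq_eqVlt ltnS => /orP[/eqP-> | j_le] s_enum.
  have shift_n : shift_at f n n = f n.+1 by rewrite /shift_at eqxx.
  have := IH (shift_at f n) n s (leqnn n); rewrite shift_n => /(_ s_enum)[s0 s0_enum s0_vdelta].
  exists (rcons_new s0 (jlabel (bigjoin n.+1 f))).
    by rewrite bigjoinSS; apply: branch_enumR.
  rewrite vdelta_rcons_new s0_vdelta fset0U (bigcup_branch_enum s0_enum) -addnA.
  rewrite (labelsS (shift_at f n)) labels_shift_at shift_n vdelta_rcons.
  rewrite (labelsS f n.+1) vdelta_rcons (labelsS f n) vdelta_rcons.
  have no_gain (X : graph) : ncomp (gsep (jlabel (f n.+1)) (jlabel (f n.+1) `|` X)) = 0.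
    exact/ncomp_gsep_subset/fsubsetUl.
  rewrite !no_gain !addn0 fsetUC !jlabel_bigjoin (labelsS (shift_at f n)) labels_shift_at.
  by rewrite shift_n (labelsS f n) !bigcup_rcons gsepU_subset ?fsubsetUl.
have [s0 s0_enum s0_vdelta] := IH f j s j_le s_enum.
exists (rcons_new s0 (jlabel (bigjoin n.+1 (shift_at f n)))).
  by rewrite bigjoinSS; apply: branch_enumL.
have U_j : jlabel (f j) `|` \bigcup_(H <- labels f n.+1) H = \bigcup_(H <- labels f n.+1) H.
  by apply/fsetUidPr/jlabel_sub_labels.
rewrite vdelta_rcons_new s0_vdelta fset0U (bigcup_branch_enum s0_enum) (labelsS f n.+1).
rewrite vdelta_rcons U_j -addnA.
rewrite !jlabel_bigjoin (labelsS (shift_at f n)) labels_shift_at /shift_at eqxx.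
by rewrite bigcup_rcons gsepU_subset // (labelsS f n) bigcup_rcons fsubsetUl.
Qed.

Local Close Scope fset_scope.

Theorem corollary5p5 (m : nat) (T : nat -> jtree) (G : nat -> graph) :
  0 < m ->
  (forall i, i < m -> jlabel (T i) = G i) ->
  forall j, j < m ->
    Psi (T j) + vdelta (G j) [seq G i | i <- iota 0 m] <= Psi (bigjoin m T).
Proof.
case: m => [|n] // _ T_G j j_lt.
have -> : [seq G i | i <- iota 0 n.+1] = labels T n.+1.
  by apply/eq_in_map => i; rewrite mem_iota => /andP[_ /T_G->].
rewrite -(T_G j j_lt); apply: Psi_addn_leq => s s_enum.
have [s' s'_enum <-] := branch_enum_bigjoin (n := n) (f := T) j_lt s_enum.
exact: vdelta_le_Psi.
Qed.
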